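(* Let $\mathcal{A}$ be a finite alphabet and $\mathcal{F}$ a finite set of finite patterns on $\mathbb{Z}^d$. If the game $\Gamma(\mathcal{A},\mathcal{F},\mathbb{Z}^d)$ is winning for $A$, then it has a finite game value. Moreover, there exists $n$ such that $A$ has a winning strategy which never plays outside $\llbracket -n,n\rrbracket^d$.
   Context: Fix $d\ge 1$. A pattern is a pair $p=(S,f)$ with $S\subseteq\mathbb{Z}^d$ and $f\in\mathcal{A}^S$. A finite pattern $q=(S',g)$ appears in $p=(S,f)$ if there is $v\in\mathbb{Z}^d$ with $v+S'\subseteq S$ and $f(v+j)=g(j)$ for all $j\in S'$. For a finite set $\mathcal{F}$ of finite patterns and $E\subseteq\mathbb{Z}^d$, the Domino game $\Gamma(\mathcal{A},\mathcal{F},E)$: two players $A$ and $B$ alternate turns, $A$ first, starting from the empty pattern; on a turn the current player either passes or colours one uncoloured cell $i\in E$ with some $a\in\mathcal{A}$. A position $(p,\rho)$ (current pattern $p$, player to move $\rho$) is final if a pattern of $\mathcal{F}$ appears in $p$; then the game ends and $A$ wins; $B$ wins if a final position never occurs. Positions winning for $A$ and their values are defined inductively: a final position is winning for $A$ with value $0$; if $\rho=A$ and some move leads to a position $(p',B)$ winning for $A$, then $(p,A)$ is winning for $A$ with value $\min v(p',B)+1$ over such moves; if $\rho=B$ and every move leads to a position $(p',A)$ winning for $A$, then $(p,B)$ is winning for $A$ with value $\sup v(p',A)+1$ over all moves (possibly infinite). The game is winning for $A$ if the initial position (empty pattern, $A$ to move) is winning for $A$, and its game value is the value of that position. $\llbracket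 -n,n\rrbracket=\{-n,\dots,n\}$. *)

From mathcomp Require Import all_boot all_order all_algebra.
From Stdlib Require Lists.List.
Set Implicit Arguments. Unset Strict Implicit. Unset Printing Implicit Defensive.
Import Order.TTheory GRing.Theory Num.Theory.

Section Domino.
Variables (d : nat) (A : finType).

Definition cell := 'rV[int]_d.

(* a pattern p = (S,f): S = {i | p i <> None}, f i = the letter *)
Definition pattern := cell -> option A.

Definition empty_pattern : pattern := fun _ => None.

Record finpat := FinPat { fdom : seq cell; fcol : cell -> A }.

Definition appears (q : finpat) (p : pattern) : Prop :=
  exists v : cell, forall j, j \in fdom q -> p (v + j)%R = Some (fcol q j).

Definition final (F : seq finpat) (p : pattern) : Prop :=
  exists2 q, Stdlib.Lists.List.In q F & appears q p.

(* None = pass ; Some (i, a) = colour cell i with a *)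
Definition move := option (cell * A).

Definition legal (p : pattern) (m : move) : Prop :=
  match m with None => True | Some (i, _) => p i = None end.

Definition play_move (p : pattern) (m : move) : pattern :=
  match m with
  | None => p
  | Some (i, a) => fun j => if j == i then Some a else p j
  end.

(* player to move: true = A, false = B.
   Winning positions for A (game Gamma(A,F,Z^d)), inductively. *)
Inductive Win (F : seq finpat) : pattern -> bool -> Prop :=
  | Win_final p r : final F p -> Win F p r
  | Win_A p m : legal p m -> Win F (play_move p m) false -> Win F p true
  | Win_B p : (forall m, legal p m -> Win F (play_move p m) true) -> Win F p false.

(* WinLe F n p r : (p,r) is winning for A with value <= n
   (values in N u {oo}; value = min+1 for A, sup+1 for B, 0 for final). *)
Inductive WinLe (F : seq finpat) : nat -> pattern -> bool -> Prop :=
  | WinLe_final n p r : final F p -> WinLe F n p r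
  | WinLe_A n p m : legal p m -> WinLe F n (play_move p m) false ->
      WinLe F n.+1 p true
  | WinLe_B n p : (forall m, legal p m -> WinLe F n (play_move p m) true) ->
      WinLe F n.+1 p false.

Definition finite_game_value (F : seq finpat) : Prop :=
  exists n : nat, WinLe F n empty_pattern true.

Definition strategy := seq move -> move.

(* a play: the infinite sequence of moves, A moving at even times *)
Definition play := nat -> move.

Definition history (m : play) (k : nat) : seq move := [seq m i | i <- iota 0 k].

Definition pat_after (m : play) (k : nat) : pattern :=
  foldl play_move empty_pattern (history m k).

Definition consistent (s : strategy) (m : play) : Prop :=
  forall k, ~~ odd k -> m k = s (history m k).

Definition in_box (n : nat) (i : cell) : Prop :=
  forall k : 'I_d, (`|i ord0 k| <= n%:Z)%R.

Definition move_in_box (n : nat) (m : move) : Prop :=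
  match m with None => True | Some (i, _) => in_box n i end.

Definition winning_strategy_in_box (F : seq finpat) (n : nat) (s : strategy) : Prop :=
  forall m : play, consistent s m ->
    (forall k, odd k -> legal (pat_after m k) (m k)) ->
    exists k, final F (pat_after m k) /\
      forall i, i < k -> ~~ odd i ->
        legal (pat_after m i) (m i) /\ move_in_box n (m i).

End Domino.

From mathcomp Require Import all_boot all_order all_algebra.
From mathcomp Require Import zify.
From Stdlib Require Import Classical ClassicalEpsilon.
Set Implicit Arguments. Unset Strict Implicit. Unset Printing Implicit Defensive.

(* Strengthen "winning with value at most n" to "winning with value at most n
   while A only colours cells of the box [[-b,b]]^d", and prove by induction on
   Win that every winning position is winning in this stronger sense for some n
   and b.  Where B moves, passing leads to a position winning with some n0, b0.
   A move of B outside [[-b0,b0]]^d only extends the pattern away from every cell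
   A will ever colour, so A's play after the pass still wins after it, with the
   same bounds; the other moves of B colour one of the finitely many cells of the
   box with one of finitely many letters, so their bounds have a finite maximum.
   A strategy realising the bounds plays, at every position, a legal move in the
   box that decreases the least value. *)

Lemma ex_least_nat (P : nat -> Prop) :
  (exists n, P n) -> exists n, P n /\ forall m, P m -> n <= m.
Proof.
move=> [n Pn]; elim/ltn_ind: n Pn => n IH Pn.
have [[m [Pm ltmn]]|no_smaller] := classic (exists m, P m /\ m < n).
  exact: IH ltmn Pm.
exists n; split=> // m Pm; rewrite leqNgt; apply/negP => ltmn.
by apply: no_smaller; exists m.
Qed.

Lemma finite_upper_bound (T : finType) (P : T -> nat -> Prop) :
  (forall t k k', k <= k' -> P t k -> P t k') ->
  (forall t, exists k, P t k) -> exists K, forall t, P t K.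
Proof.
move=> P_mono P_ex.
suff [K PK] : exists K, forall t, t \in enum T -> P t K.
  by exists K => t; apply: PK; rewrite mem_enum.
elim: (enum T) => [|t s [K PK]]; first by exists 0.
have [k Pk] := P_ex t.
exists (maxn K k) => u; rewrite inE => /predU1P [->|us].
- exact: P_mono (leq_maxr K k) Pk.
- exact: P_mono (leq_maxl K k) (PK u us).
Qed.

Section Box.
Variable d : nat.

Lemma in_boxP n (c : cell d) : in_box n c <-> forall k, absz (c ord0 k) <= n.
Proof. by split=> cn k; have := cn k; lia. Qed.

Lemma in_box_le n n' (c : cell d) : n <= n' -> in_box n c -> in_box n' c.
Proof. by move=> le_nn' /in_boxP cn; apply/in_boxP => k; have := cn k; lia. Qed.

Definition cell_norm (c : cell d) : nat := \max_(k < d) absz (c ord0 k).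

Lemma in_box_cell_norm (c : cell d) : in_box (cell_norm c) c.
Proof. by apply/in_boxP => k; apply: (leq_bigmax_cond k). Qed.

Definition box_cell n (f : {ffun 'I_d -> 'I_(2 * n).+1}) : cell d :=
  (\row_k ((f k : nat)%:Z - n%:Z))%R.

Lemma box_cell_onto n (c : cell d) : in_box n c -> exists f, @box_cell n f = c.
Proof.
move=> /in_boxP cn; exists [ffun k => inord (absz (c ord0 k + n%:Z)%R)].
apply/rowP => k; have -> : (0%R : 'I_1) = ord0 by apply/val_inj.
rewrite !mxE ffunE inordK; have := cn k; lia.
Qed.

End Box.

Section Game.
Variables (d : nat) (A : finType) (F : seq (finpat d A)).

Local Notation pat := (pattern d A).
Local Notation mv := (move d A).

Definition subpattern (p q : pat) := forall c a, p c = Some a -> q c = Some a.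

Definition agree_on_box b (p q : pat) := forall c, in_box b c -> q c = p c.

Lemma final_subpattern p q : subpattern p q -> final F p -> final F q.
Proof. by move=> pq [f Ff [v fv]]; exists f => //; exists v => j /fv /pq. Qed.

Lemma legal_subpattern p q m : subpattern p q -> legal q m -> legal p m.
Proof.
case: m => [[c a]|] //= pq qc; case pc: (p c) => [x|] //.
by rewrite (pq _ _ pc) in qc.
Qed.

Lemma legal_agree_on_box b p q m :
  agree_on_box b p q -> move_in_box b m -> legal p m -> legal q m.
Proof. by case: m => [[c a]|] //= pq cb; rewrite /legal pq. Qed.

Lemma play_move_subpattern p q m :
  subpattern p q -> subpattern (play_move p m) (play_move q m).
Proof. by case: m => [[c a]|] //= pq c' a'; case: (c' == c) => //; apply: pq. Qed.

Lemma play_move_agree_on_box b p q m :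
  agree_on_box b p q -> agree_on_box b (play_move p m) (play_move q m).
Proof. by case: m => [[c a]|] //= pq c' c'b; case: (c' == c) => //; apply: pq. Qed.

Lemma subpattern_play_move p c a :
  p c = None -> subpattern p (play_move p (Some (c, a))).
Proof. by move=> pc c' a' /=; case: eqP => // ->; rewrite pc. Qed.

Lemma agree_on_box_play_move b p c a :
  ~ in_box b c -> agree_on_box b p (play_move p (Some (c, a))).
Proof. by move=> cb c' c'b /=; case: eqP => // ec; rewrite ec in c'b. Qed.

Inductive WinLeBox (b : nat) : nat -> pat -> bool -> Prop :=
  | WinLeBox_final n p r : final F p -> WinLeBox b n p r
  | WinLeBox_A n p m : legal p m -> move_in_box b m ->
      WinLeBox b n (play_move p m) false -> WinLeBox b n.+1 p true
  | WinLeBox_B n p : (forall m, legal p m -> WinLeBox b n (play_move p m) true) ->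
      WinLeBox b n.+1 p false.

Lemma WinLeBox_WinLe b n p r : WinLeBox b n p r -> WinLe F n p r.
Proof.
elim=> {n p r} [n p r /WinLe_final //|n p m pm _ _|n p _]; last exact: WinLe_B.
exact: WinLe_A.
Qed.

Lemma WinLeBox_le b b' n n' p r : b <= b' -> n <= n' ->
  WinLeBox b n p r -> WinLeBox b' n' p r.
Proof.
move=> le_bb' + w; elim: w n' => {n p r} [n p r Fp|n p m pm mb _ IH|n p _ IH] n'.
- by move=> _; apply: WinLeBox_final.
- case: n' => // n' le_nn'; apply: (WinLeBox_A (m := m)) (IH _ le_nn') => //.
  by case: m {pm IH} mb => [[c a]|] //=; apply: in_box_le.
- by case: n' => // n' le_nn'; apply: WinLeBox_B => m pm; apply: IH.
Qed.

Lemma WinLeBox_extend b n p q r : subpattern p q -> agree_on_box b p q ->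
  WinLeBox b n p r -> WinLeBox b n q r.
Proof.
move=> + + w; elim: w q => {n p r} [n p r Fp|n p m pm mb _ IH|n p _ IH] q pq qb.
- exact/WinLeBox_final/(final_subpattern pq).
- apply: (WinLeBox_A (m := m)); first exact: legal_agree_on_box qb mb pm.
    exact: mb.
  by apply: IH; [apply: play_move_subpattern | apply: play_move_agree_on_box].
- apply: WinLeBox_B => m qm; apply: (IH m (legal_subpattern pq qm)).
    exact: play_move_subpattern.
  exact: play_move_agree_on_box.
Qed.

Lemma WinLeBox_trueP b n p : WinLeBox b n p true -> ~ final F p ->
  exists n' m, [/\ n = n'.+1, legal p m, move_in_box b m &
                   WinLeBox b n' (play_move p m) false].
Proof.
move Er: true => r w; case: w Er => [n' {}p {}r Fp _ /(_ Fp) //|n' {}p m pm mb w _ _|//].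
by exists n', m.
Qed.

Lemma WinLeBox_falseP b n p : WinLeBox b n p false -> ~ final F p ->
  exists n', n = n'.+1 /\ forall m, legal p m -> WinLeBox b n' (play_move p m) true.
Proof.
move Er: false => r w; case: w Er => [n' {}p {}r Fp _ /(_ Fp) //|//|n' {}p w _ _].
by exists n'.
Qed.

Lemma WinLeBox_A_exists p m k :
  legal p m -> WinLeBox k k (play_move p m) false -> exists k', WinLeBox k' k' p true.
Proof.
case: m => [[c a]|] pm w; last first.
  by exists k.+1; apply: (WinLeBox_A (m := None)) (WinLeBox_le _ _ w).
exists (maxn k (cell_norm c)).+1; apply: (WinLeBox_A (m := Some (c, a))) => //=.
  by apply: in_box_le (in_box_cell_norm c); rewrite leqW ?leq_maxr.
by apply: WinLeBox_le w; rewrite ?leqW ?leq_maxl.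
Qed.

Lemma WinLeBox_B_exists p :
  (forall m, legal p m -> exists k, WinLeBox k k (play_move p m) true) ->
  exists k, WinLeBox k k p false.
Proof.
move=> IH; have [k0 w0] := IH None I.
pose P (t : {ffun 'I_d -> 'I_(2 * k0).+1} * A) k :=
  legal p (Some (box_cell t.1, t.2)) ->
  WinLeBox k k (play_move p (Some (box_cell t.1, t.2))) true.
have [K PK] : exists K, forall t, P t K.
  apply: finite_upper_bound => [t k k' le_kk' Ptk pt|t].
    by apply: WinLeBox_le (Ptk pt).
  have [pt|npt] := classic (legal p (Some (box_cell t.1, t.2))); last by exists 0.
  by have [k w] := IH _ pt; exists k.
exists (maxn K k0).+1; apply: WinLeBox_B => -[[c a]|] pm; last first.
  by apply: WinLeBox_le w0; rewrite ?leqW ?leq_maxr.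
have [cb|ncb] := classic (in_box k0 c).
  have [f fc] := box_cell_onto cb; rewrite -fc in pm *.
  by apply: WinLeBox_le (PK (f, a) pm); rewrite ?leqW ?leq_maxl.
have w0c : WinLeBox k0 k0 (play_move p (Some (c, a))) true.
  exact: WinLeBox_extend (subpattern_play_move _ pm) (agree_on_box_play_move _ _ ncb) w0.
by apply: WinLeBox_le w0c; rewrite ?leqW ?leq_maxr.
Qed.

Lemma Win_WinLeBox p r : Win F p r -> exists k, WinLeBox k k p r.
Proof.
elim=> {p r} [p r Fp|p m pm _ [k w]|p _ IH].
- by exists 0; apply: WinLeBox_final.
- exact: WinLeBox_A_exists pm w.
- exact: WinLeBox_B_exists.
Qed.

Definition good_move b (p : pat) (m : mv) :=
  forall n, WinLeBox b n.+1 p true -> ~ final F p ->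
    [/\ legal p m, move_in_box b m & WinLeBox b n (play_move p m) false].

Lemma good_move_exists b p : exists m, good_move b p m.
Proof.
have [[n [w Fp]]|never] :=
  classic (exists n, WinLeBox b n.+1 p true /\ ~ final F p); last first.
  by exists None => n w Fp; case: never; exists n.
have [|n0 [[w0 _] n0_least]] :=
  @ex_least_nat (fun n => WinLeBox b n.+1 p true /\ ~ final F p); first by exists n.
have [_ [m [[<-] pm mb w0']]] := WinLeBox_trueP w0 Fp.
exists m => n' w' _; split=> //; apply: WinLeBox_le w0' => //.
exact: n0_least.
Qed.

Definition box_strategy b : strategy d A := fun h =>
  epsilon (inhabits None) (good_move b (foldl (@play_move d A) (@empty_pattern d A) h)).

Lemma pat_afterS (m : play d A) i :
  pat_after m i.+1 = play_move (pat_after m i) (m i).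
Proof. by rewrite /pat_after /history -addn1 iotaD map_cat foldl_cat. Qed.

Section Play.
Variables (b : nat) (m : play d A).
Hypothesis m_box_strategy : consistent (box_strategy b) m.
Hypothesis m_legal_B : forall k, odd k -> legal (pat_after m k) (m k).

Lemma box_strategy_good i : ~~ odd i -> good_move b (pat_after m i) (m i).
Proof.
by move=> ei; rewrite m_box_strategy //; apply: epsilon_spec; apply: good_move_exists.
Qed.

Lemma box_strategy_wins_from n i : ~~ odd i -> WinLeBox b n (pat_after m i) true ->
  exists K, [/\ i <= K, final F (pat_after m K) &
    forall j, i <= j < K -> ~~ odd j ->
      legal (pat_after m j) (m j) /\ move_in_box b (m j)].
Proof.
elim/ltn_ind: n i => n IH i ei w.
have [Fi|nFi] := classic (final F (pat_after m i)).
  by exists i; split=> // j; rewrite ltnNge andbN.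
have [n' [_ [ni _ _ _]]] := WinLeBox_trueP w nFi; rewrite ni in w.
have [pm mb w1] := box_strategy_good ei w nFi; rewrite -pat_afterS in w1.
have good_i j : i <= j < i.+2 -> ~~ odd j ->
    legal (pat_after m j) (m j) /\ move_in_box b (m j).
  case/andP=> le_ij; rewrite ltnS leq_eqVlt => /predU1P [->|lt_ji _].
    by rewrite /= ei.
  by have -> : j = i by apply/eqP; rewrite eqn_leq le_ij andbT; exact: lt_ji.
have [F1|nF1] := classic (final F (pat_after m i.+1)).
  exists i.+1; split=> // j /andP [le_ij lt_ji]; apply: good_i.
  by rewrite le_ij; exact: ltnW lt_ji.
have [n'' [n'E w2]] := WinLeBox_falseP w1 nF1.
have B_legal : legal (pat_after m i.+1) (m i.+1) by apply: m_legal_B; rewrite /= ei.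
have w3 := w2 _ B_legal; rewrite -pat_afterS in w3.
have lt_n : n'' < n by rewrite ni n'E ltnS leqnSn.
have ei2 : ~~ odd i.+2 by rewrite /= negbK.
have [K [le_K FK goodK]] := IH n'' lt_n i.+2 ei2 w3.
exists K; split=> // [|j /andP [le_ij lt_jK]]; first exact: ltnW (ltnW le_K).
have [le_j2|lt_j2] := leqP i.+2 j; [apply: goodK | apply: good_i].
  by rewrite le_j2.
by rewrite le_ij.
Qed.

End Play.

Lemma box_strategy_wins b n : WinLeBox b n (@empty_pattern d A) true ->
  winning_strategy_in_box F b (box_strategy b).
Proof.
move=> w m m_strat m_legal.
have w0 : WinLeBox b n (pat_after m 0) true by [].
have [K [_ FK goodK]] := box_strategy_wins_from m_strat m_legal (i := 0) isT w0.
by exists K; split=> // j; apply: goodK.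
Qed.

End Game.

Theorem corollary1 (d : nat) (A : finType) (F : seq (finpat d A)) :
  0 < d ->
  Win F (@empty_pattern d A) true ->
  finite_game_value F /\
  exists n : nat, exists s : strategy d A, winning_strategy_in_box F n s.
Proof.
move=> _ /Win_WinLeBox [k w]; split.
- by exists k; apply: WinLeBox_WinLe w.
- by exists k, (box_strategy F k); apply: box_strategy_wins w.
Qed.
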